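(* Let $\Omega$, $d$ and $x_1^0,\dots,x_{m_1}^0$ be as in the context, let $v_M>0$ and $\epsilon>0$. Then there exists $t_\epsilon(v_M)>0$ such that for every $0<\tau_2\le t_\epsilon(v_M)$ there exists $l_\epsilon(\tau_2)>0$ with the following property: for all $1\le i\le m_1$ and all $(x,v)\in B(x_i^0,d)\times\overline{B(0,v_M)}$, if $X_s(x,v)\in\Omega_{l_\epsilon(\tau_2)}\cap B(x_i^0,d)$ for all $s\in[0,\tau_2]$, then $|V_s(x,v)-v|<\epsilon$ for all $s\in[0,t_\epsilon(v_M)]$.
   Context: $\Omega\subset\mathbb{R}^3$ is a connected bounded open set with $C^2$ boundary, $n$ the outward unit normal, $\Omega_\ell=\{x\in\Omega:d(x,\partial\Omega)<\ell\}$. There is $\delta(\Omega)>0$ such that for $0<d<\min\{1,\delta\}$ (fixed, also smaller than a uniform interior sphere radius $d_r$ of $\Omega$) there are $x_1^0,\dots,x_{m_1}^0\in\partial\Omega$ with $\partial\Omega\subset\bigcup_iB(x_i^0,d/8)$ and, for each $i$, an orthonormal basis $\{e_i^1,e_i^2,-n(x_i^0)\}$ and a $C^2$ function $\phi_i:\mathbb{R}^2\to\mathbb{R}$, $\phi_i(0)=0$, $\nabla\phi_i(0)=0$, $|\nabla\phi_i|<\frac1{100}$, such that in $B(x_i^0,3d)$ the boundary is the graph $\{x_i^0+u_1e_i^1+u_2e_i^2-\phi_i(u_1,u_2)n(x_i^0)\}$ and $\Omega$ the region $u_3>\phi_i$. $(X_s(x,v),V_s(x,v))$ denotes the position and velocity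 at time $s\ge0$ of the billiard (specular reflection) trajectory starting at $(x,v)$: it moves in straight lines with constant velocity in $\overline\Omega$ and, on hitting $\partial\Omega$ at a point $y$, the velocity $w$ is replaced by $w-2(w\cdot n(y))n(y)$ (trajectories with infinitely many rebounds in finite time or ending in grazing ''stop'' configurations form a null set). *)

From HB Require Import structures.
From mathcomp Require Import all_boot all_order all_algebra.
From mathcomp Require Import all_classical all_reals all_analysis.
Set Implicit Arguments. Unset Strict Implicit. Unset Printing Implicit Defensive.
Import Order.TTheory GRing.Theory Num.Theory.
Import numFieldNormedType.Exports.
Local Open Scope classical_set_scope.
Local Open Scope ring_scope.

Section Defs.
Variable R : realType.
Notation V3 := 'rV[R]_3.

Definition dot (u w : V3) : R := \sum_(k < 3) u 0 k * w 0 k.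
Definition enorm (u : V3) : R := Num.sqrt (dot u u).
Definition eball (c : V3) (r : R) : set V3 := [set y | enorm (y - c) < r].

Definition bdry (A : set V3) : set V3 := closure A `\` interior A.

(* Omega_l = { x in Omega : d(x, boundary) < l } *)
Definition layer (Om : set V3) (l : R) : set V3 :=
  [set x | Om x /\ exists y, bdry Om y /\ enorm (x - y) < l].

Definition bounded3 (Om : set V3) : Prop :=
  exists M : R, forall x, Om x -> enorm x <= M.

Definition chart_pt (x0 e1 e2 e3 : V3) (u1 u2 u3 : R) : V3 :=
  x0 + u1 *: e1 + u2 *: e2 + u3 *: e3.

Definition orthonormal3 (a b c : V3) : Prop :=
  [/\ dot a a = 1, dot b b = 1, dot c c = 1 &
      [/\ dot a b = 0, dot a c = 0 & dot b c = 0]].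

Definition pd1 (f : R -> R -> R) : R -> R -> R :=
  fun a b => derive1 (fun t => f t b) a.
Definition pd2 (f : R -> R -> R) : R -> R -> R :=
  fun a b => derive1 (fun t => f a t) b.
Definition partials_exist (f : R -> R -> R) : Prop :=
  forall a b, derivable (fun t => f t b) a 1 /\ derivable (fun t => f a t) b 1.
Definition jcont (f : R -> R -> R) : Prop :=
  continuous (fun p : R * R => f p.1 p.2).

Definition C2 (f : R -> R -> R) : Prop :=
  [/\ partials_exist f, partials_exist (pd1 f), partials_exist (pd2 f),
      jcont f & [/\ jcont (pd1 f), jcont (pd2 f), jcont (pd1 (pd1 f)),
      jcont (pd2 (pd1 f)) & jcont (pd1 (pd2 f)) /\ jcont (pd2 (pd2 f))]].

Definition C2_boundary (Om : set V3) : Prop :=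
  forall y, bdry Om y -> exists (r : R) (e1 e2 e3 : V3) (phi : R -> R -> R),
    [/\ 0 < r, orthonormal3 e1 e2 e3, C2 phi &
      forall z, eball y r z ->
        (Om z <-> exists u1 u2 u3, z = chart_pt y e1 e2 e3 u1 u2 u3 /\ phi u1 u2 < u3)].

(* n is the outward unit normal: unit, orthogonal to the boundary at y
   (tangency), and pointing out of Om *)
Definition outward_unit_normal (Om : set V3) (n : V3 -> V3) : Prop :=
  forall y, bdry Om y ->
    [/\ enorm (n y) = 1,
        (forall eps : R, 0 < eps -> exists r : R, 0 < r /\
           forall z, bdry Om z -> enorm (z - y) < r ->
             `|dot (z - y) (n y)| <= eps * enorm (z - y)) &
        (exists r : R, 0 < r /\ forall t : R, 0 < t < r -> Om (y - t *: n y))].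

Definition refl (w m : V3) : V3 := w - (2 * dot w m) *: m.

(* (X, Vs) is a billiard trajectory in Om starting at (x, v), defined for all
   times s >= 0, with finitely many rebounds (set T) in each bounded time
   interval; Vs is right-continuous (post-collision velocity at a rebound). *)
Definition billiard (Om : set V3) (n : V3 -> V3) (x v : V3)
    (X Vs : R -> V3) : Prop :=
  exists T : set R,
    [/\ T `<=` [set t | 0 < t],
        (forall M : R, finite_set (T `&` [set t | 0 <= t <= M])),
        X 0 = x, Vs 0 = v &
    [/\ (forall s, 0 <= s -> closure Om (X s)),
        (forall s1 s2, 0 <= s1 <= s2 -> (forall t, s1 < t < s2 -> ~ T t) ->
           X s2 = X s1 + (s2 - s1) *: Vs s1 /\
           (forall s, s1 <= s < s2 -> Vs s = Vs s1)) &
        (forall t, T t -> bdry Om (X t) /\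
           exists s, [/\ 0 <= s < t, (forall u, s < u < t -> ~ T u) &
                       Vs t = refl (Vs s) (n (X t))])]].

End Defs.

From HB Require Import structures.
From mathcomp Require Import all_boot all_order all_algebra.
From mathcomp Require Import all_classical all_reals all_analysis.
From mathcomp Require Import ring lra.
Set Implicit Arguments. Unset Strict Implicit. Unset Printing Implicit Defensive.
Import Order.TTheory GRing.Theory Num.Theory.
Import numFieldNormedType.Exports.
Local Open Scope classical_set_scope.
Local Open Scope ring_scope.

(* Near the wall, work in a chart in which the boundary is the graph u3 = f(u1, u2),
   with |grad f| < 1/100 and grad f Lipschitz.  At a point z, split a velocity w into
   its normal speed F = w3 - grad f(z).(w1, w2) and the tangential combinations
   A_j = w_j + d_j f(z) w3, which together control |w|.  The outward normal at a wall
   point is proportional to (- grad f, 1), so a specular reflection keeps A_1, A_2 and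
   |w| and flips the sign of F, while along a flight of length t they change by
   O(|v|^2 t).  Up to time t_eps the A_j thus stay close to their initial values and
   |F| stays close to |F(0)|.  Finally F(0) is small: during [0, tau2] the particle
   stays in the layer, so it never meets the wall and moves on a straight line, along
   which its height above the wall changes by tau2 F(0) + O(tau2^2) while staying in
   (0, 2 l), with l << eps tau2. *)

Section planar_calculus.
Variable R : realType.
Implicit Types (f g h : R -> R -> R) (a b B L : R).

Lemma jcont_bounded_on_square h B : jcont h ->
  exists2 M, 0 < M & forall a b, `|a| <= B -> `|b| <= B -> `|h a b| <= M.
Proof.
move=> hc.
have cA : compact (`[-B, B]%classic `*` `[-B, B]%classic : set (R * R)).
  by apply: compact_setX; apply: segment_compact.
have [M M0 HM] := ex_strict_bound_gt0
  (compact_bounded (continuous_compact (continuous_subspaceT hc) cA)).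
exists M => // a b ha hb; apply/ltW/(HM (h a b)).
by exists (a, b); rewrite //= !in_itv /= -!ler_norml.
Qed.

Lemma MVT_between (u : R -> R) : (forall t, derivable u t 1) ->
  forall a b, exists2 c, a <= c <= b \/ b <= c <= a & u b - u a = derive1 u c * (b - a).
Proof.
move=> du.
have mvt a b : a <= b -> exists2 c, a <= c <= b & u b - u a = derive1 u c * (b - a).
  move=> ab; have [c cab E] := MVT_segment (df := derive1 u) ab
    (fun x _ => ltac:(rewrite derive1E; exact: derivableP))
    (derivable_within_continuous (fun x _ => du x)).
  by exists c; rewrite // -in_itv.
move=> a b; case: (lerP a b) => [/mvt[c hc E] | /ltW/mvt[c hc E]]; exists c.
- by left.
- exact: E.
- by right.
- by rewrite -opprB E -mulrN opprB.
Qed.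

Lemma between_norm_le a b c B : a <= c <= b \/ b <= c <= a ->
  `|a| <= B -> `|b| <= B -> `|c| <= B.
Proof. by rewrite !ler_norml => -[] /andP[? ?] /andP[? ?] /andP[? ?]; lra. Qed.

Lemma between_dist_le a b c : a <= c <= b \/ b <= c <= a -> `|c - a| <= `|b - a|.
Proof.
case=> /andP[h1 h2].
  by rewrite !ger0_norm ?lerD2r ?subr_ge0 // (le_trans h1 h2).
by rewrite !ler0_norm ?lerN2 ?lerD2r ?subr_le0 // (le_trans h1 h2).
Qed.

Lemma partials_lipschitz g B M1 M2 : partials_exist g ->
  (forall a b, `|a| <= B -> `|b| <= B -> `|pd1 g a b| <= M1 /\ `|pd2 g a b| <= M2) ->
  forall a b a' b', `|a| <= B -> `|b| <= B -> `|a'| <= B -> `|b'| <= B ->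
  `|g a b - g a' b'| <= M1 * `|a - a'| + M2 * `|b - b'|.
Proof.
move=> dg gB a b a' b' ha hb ha' hb'.
have [c hc Ec] := MVT_between (fun t => (dg t b).1) a' a.
have [e he Ee] := MVT_between (fun t => (dg a' t).2) b' b.
have -> : g a b - g a' b' = (g a b - g a' b) + (g a' b - g a' b') by ring.
rewrite Ec Ee.
have [+ _] := gB c b (between_norm_le hc ha' ha) hb.
have [_ +] := gB a' e ha' (between_norm_le he hb' hb).
rewrite /pd1 /pd2 => h2 h1.
by apply: (le_trans (ler_normD _ _)); rewrite !normrM lerD // ler_wpM2r.
Qed.

Definition grad_lipschitz_on f B L :=
  forall a b a' b', `|a| <= B -> `|b| <= B -> `|a'| <= B -> `|b'| <= B ->
    `|pd1 f a b - pd1 f a' b'| <= L * (`|a - a'| + `|b - b'|) /\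
    `|pd2 f a b - pd2 f a' b'| <= L * (`|a - a'| + `|b - b'|).

Lemma grad_lipschitz_on_le f B L L' :
  L <= L' -> grad_lipschitz_on f B L -> grad_lipschitz_on f B L'.
Proof.
move=> LL' hL a b a' b' ha hb ha' hb'; have [h1 h2] := hL _ _ _ _ ha hb ha' hb'.
have n0 : 0 <= `|a - a'| + `|b - b'| by rewrite addr_ge0.
by split; apply: le_trans (ler_wpM2r n0 LL').
Qed.

Lemma C2_grad_lipschitz f B : C2 f -> exists2 L, 0 < L & grad_lipschitz_on f B L.
Proof.
move=> [_ d1 d2 _ [_ _ c11 c21 [c12 c22]]].
have [M1 M10 hM1] := jcont_bounded_on_square B c11.
have [M2 M20 hM2] := jcont_bounded_on_square B c21.
have [M3 M30 hM3] := jcont_bounded_on_square B c12.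
have [M4 M40 hM4] := jcont_bounded_on_square B c22.
exists (M1 + M2 + M3 + M4); first lra.
move=> a b a' b' ha hb ha' hb'.
have L1 := @partials_lipschitz _ B M1 M2 d1
  (fun a b ha hb => conj (hM1 a b ha hb) (hM2 a b ha hb)) a b a' b' ha hb ha' hb'.
have L2 := @partials_lipschitz _ B M3 M4 d2
  (fun a b ha hb => conj (hM3 a b ha hb) (hM4 a b ha hb)) a b a' b' ha hb ha' hb'.
have := normr_ge0 (a - a'); have := normr_ge0 (b - b').
by split; [apply: (le_trans L1) | apply: (le_trans L2)]; nra.
Qed.

Lemma C2_family_grad_lipschitz (m : nat) (phi : 'I_m -> R -> R -> R) B :
  (forall i, C2 (phi i)) -> exists2 L, 0 < L & forall i, grad_lipschitz_on (phi i) B L.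
Proof.
move=> hC2.
have /choice[Lf hLf] : forall i, exists L, 0 < L /\ grad_lipschitz_on (phi i) B L.
  by move=> i; have [L ? ?] := C2_grad_lipschitz B (hC2 i); exists L.
have Lf0 i : 0 <= Lf i by case: (hLf i) => /ltW.
exists (1 + \sum_(i < m) Lf i) => [|i].
  have : 0 <= \sum_(i < m) Lf i by apply: sumr_ge0 => j _; exact: Lf0.
  lra.
apply: grad_lipschitz_on_le (proj2 (hLf i)).
rewrite (bigD1 i) //=.
have : 0 <= \sum_(j < m | j != i) Lf j by apply: sumr_ge0 => j _; exact: Lf0.
lra.
Qed.

Lemma grad_lipschitz_taylor f B L : partials_exist f -> 0 <= L ->
  grad_lipschitz_on f B L ->
  forall a b q1 q2, `|a| <= B -> `|b| <= B -> `|a + q1| <= B -> `|b + q2| <= B ->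
  `|f (a + q1) (b + q2) - f a b - (pd1 f a b * q1 + pd2 f a b * q2)|
    <= L * (`|q1| + `|q2|) ^+ 2.
Proof.
move=> df L0 hLip a b q1 q2 ha hb haq hbq.
have [c hc Ec] := MVT_between (fun t => (df t (b + q2)).1) a (a + q1).
have [e he Ee] := MVT_between (fun t => (df a t).2) b (b + q2).
have -> : f (a + q1) (b + q2) - f a b - (pd1 f a b * q1 + pd2 f a b * q2) =
    (pd1 f c (b + q2) - pd1 f a b) * q1 + (pd2 f a e - pd2 f a b) * q2.
  have -> : f (a + q1) (b + q2) - f a b =
      (f (a + q1) (b + q2) - f a (b + q2)) + (f a (b + q2) - f a b) by ring.
  by rewrite Ec Ee /pd1 /pd2; ring.
have [L1 _] := hLip _ _ _ _ (between_norm_le hc ha haq) hbq ha hb.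
have [_ L2] := hLip _ _ _ _ ha (between_norm_le he hb hbq) ha hb.
have dc := between_dist_le hc; have de := between_dist_le he.
have addKl (x y : R) : x + y - x = y by ring.
rewrite !addKl in dc de L1; rewrite subrr normr0 add0r in L2.
have n1 := normr_ge0 q1; have n2 := normr_ge0 q2.
have {}L1 : `|pd1 f c (b + q2) - pd1 f a b| <= L * (`|q1| + `|q2|).
  by apply: le_trans L1 _; rewrite ler_wpM2l //; lra.
have {}L2 : `|pd2 f a e - pd2 f a b| <= L * (`|q1| + `|q2|).
  by apply: le_trans L2 _; rewrite ler_wpM2l //; lra.
apply: le_trans (ler_normD _ _) _; rewrite !normrM.
have := normr_ge0 (pd1 f c (b + q2) - pd1 f a b).
have := normr_ge0 (pd2 f a e - pd2 f a b).
nra.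
Qed.

End planar_calculus.

Section euclidean_space.
Variable R : realType.
Notation V3 := 'rV[R]_3.
Implicit Types (u w m : V3) (a r : R).

Lemma normr_le_sqr (c e : R) : 0 <= e -> (`|c| <= e) = (c ^+ 2 <= e ^+ 2).
Proof. by move=> e0; rewrite -(real_normK (num_real c)) ler_pXn2r // nnegrE. Qed.

Lemma dotE u w : dot u w = u 0 0 * w 0 0 + u 0 1 * w 0 1 + u 0 2%:R * w 0 2%:R.
Proof.
rewrite /dot !big_ord_recr big_ord0 /= add0r.
by congr (_ + _ + _); congr (_ * _); congr (fun_of_matrix _ _ _); apply: val_inj.
Qed.

Lemma dotC u w : dot u w = dot w u.
Proof. by rewrite !dotE; ring. Qed.

Lemma dotDl u u' w : dot (u + u') w = dot u w + dot u' w.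
Proof. by rewrite !dotE !mxE; ring. Qed.

Lemma dotBl u u' w : dot (u - u') w = dot u w - dot u' w.
Proof. by rewrite !dotE !mxE; ring. Qed.

Lemma dotZl a u w : dot (a *: u) w = a * dot u w.
Proof. by rewrite !dotE !mxE; ring. Qed.

Lemma dot_ge0 u : 0 <= dot u u.
Proof. by rewrite dotE; nra. Qed.

Lemma dot_CauchySchwarz u w : dot u w ^+ 2 <= dot u u * dot w w.
Proof.
rewrite !dotE -subr_ge0.
set a1 := u 0 0; set a2 := u 0 1; set a3 := u 0 2%:R.
set c1 := w 0 0; set c2 := w 0 1; set c3 := w 0 2%:R.
(* Lagrange's identity *)
have -> : (a1 * a1 + a2 * a2 + a3 * a3) * (c1 * c1 + c2 * c2 + c3 * c3)
    - (a1 * c1 + a2 * c2 + a3 * c3) ^+ 2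
    = (a1 * c2 - a2 * c1) ^+ 2 + (a1 * c3 - a3 * c1) ^+ 2 + (a2 * c3 - a3 * c2) ^+ 2.
  by ring.
by rewrite !addr_ge0 ?sqr_ge0.
Qed.

Lemma enorm_ge0 u : 0 <= enorm u.
Proof. exact: sqrtr_ge0. Qed.

Lemma sqr_enorm u : enorm u ^+ 2 = dot u u.
Proof. exact/sqr_sqrtr/dot_ge0. Qed.

Lemma enorm_lt_sqr u r : 0 <= r -> (enorm u < r) = (dot u u < r ^+ 2).
Proof. by move=> r0; rewrite -sqr_enorm ltr_pXn2r // nnegrE enorm_ge0. Qed.

Lemma enorm_le_sqr u r : 0 <= r -> (enorm u <= r) = (dot u u <= r ^+ 2).
Proof. by move=> r0; rewrite -sqr_enorm ler_pXn2r // nnegrE enorm_ge0. Qed.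

Lemma dot_le_enorm u w : dot u w <= enorm u * enorm w.
Proof.
have := dot_CauchySchwarz u w; rewrite -!sqr_enorm -exprMn.
have := mulr_ge0 (enorm_ge0 u) (enorm_ge0 w).
set p := enorm u * enorm w; nra.
Qed.

Lemma enormD u w : enorm (u + w) <= enorm u + enorm w.
Proof.
rewrite enorm_le_sqr ?addr_ge0 ?enorm_ge0 // !dotDl !(dotC _ (u + w)) !dotDl (dotC w u).
have := dot_le_enorm u w; rewrite -!sqr_enorm; lra.
Qed.

Lemma enormZ a u : enorm (a *: u) = `|a| * enorm u.
Proof. by rewrite /enorm dotZl dotC dotZl mulrA -expr2 sqrtrM ?sqr_ge0 // sqrtr_sqr. Qed.

Lemma enormN u : enorm (- u) = enorm u.
Proof. by rewrite -scaleN1r enormZ normrN normr1 mul1r. Qed.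

Lemma enorm_distC u w : enorm (u - w) = enorm (w - u).
Proof. by rewrite -enormN opprB. Qed.

Lemma enorm0 : enorm (0 : V3) = 0.
Proof. by rewrite -(scale0r (0 : V3)) enormZ normr0 mul0r. Qed.

Lemma enorm_triangle (c z z' : V3) : enorm (z' - c) <= enorm (z - c) + enorm (z' - z).
Proof.
have -> : z' - c = (z' - z) + (z - c) by rewrite addrA subrK.
by rewrite addrC enormD.
Qed.

Lemma orthonormal3_span b1 b2 b3 : orthonormal3 b1 b2 b3 ->
  forall u, u = dot u b1 *: b1 + dot u b2 *: b2 + dot u b3 *: b3.
Proof.
move=> [haa hbb hcc [hab hac hbc]] u.
pose e (i : 'I_3) : V3 := if val i == 0%N then b1 else if val i == 1%N then b2 else b3.
pose M : 'M[R]_3 := \matrix_(i, j) e i 0 j.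
have MMT : M *m M^T = 1%:M.
  apply/matrixP => i k; rewrite !mxE.
  have -> : \sum_j M i j * M^T j k = dot (e i) (e k) by apply: eq_bigr => j _; rewrite !mxE.
  case: i => [[|[|[|?]]] ?] //=; case: k => [[|[|[|?]]] ?] //=;
    rewrite /e /= ?haa ?hbb ?hcc ?hab ?hac ?hbc // dotC ?hab ?hac ?hbc //.
have rowM i : row i M = e i.
  by apply/rowP => j; rewrite !mxE; have -> : (0 : 'I_1) = ord0 by apply: val_inj.
have coefM i : (u *m M^T) 0 i = dot u (e i).
  by rewrite !mxE; apply: eq_bigr => j _; rewrite !mxE.
have -> : dot u b1 *: b1 + dot u b2 *: b2 + dot u b3 *: b3 = (u *m M^T) *m M.
  by rewrite mulmx_sum_row !big_ord_recr big_ord0 /= add0r !rowM !coefM.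
by rewrite -mulmxA (mulmx1C MMT) mulmx1.
Qed.

Lemma dot_orthonormal3 b1 b2 b3 : orthonormal3 b1 b2 b3 -> forall u w,
  dot u w = dot u b1 * dot w b1 + dot u b2 * dot w b2 + dot u b3 * dot w b3.
Proof.
move=> hON u w; rewrite {1}(orthonormal3_span hON u) !dotDl !dotZl.
by rewrite (dotC b1) (dotC b2) (dotC b3).
Qed.

Lemma enorm_refl w m : dot m m = 1 -> enorm (refl w m) = enorm w.
Proof.
move=> hm; rewrite /enorm /refl; congr Num.sqrt.
rewrite dotBl !(dotC _ (w - _)) !dotBl !dotZl !(dotC _ (_ *: m)) !dotZl hm (dotC m w).
by ring.
Qed.

End euclidean_space.

Section seq_min.
Variable R : realType.

Lemma seq_has_min (s : seq R) (P : R -> Prop) : (exists2 t, t \in s & P t) ->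
  exists t, [/\ t \in s, P t & forall u, u \in s -> P u -> t <= u].
Proof.
elim: s => [[t //]|x s IH [t ts Pt]].
have [Px|nPx] := pselect (P x); last first.
  have [|m [ms Pm mmin]] := IH.
    by move: ts; rewrite inE => /predU1P[tx|]; [move: Pt; rewrite tx | exists t].
  exists m; split; rewrite ?inE ?ms ?orbT // => u /predU1P[-> /nPx //|]; exact: mmin.
have [[y ys Py]|nos] := pselect (exists2 y, y \in s & P y); last first.
  exists x; split; rewrite ?inE ?eqxx // => u /predU1P[-> //|us Pu].
  by case: nos; exists u.
have [m [ms Pm mmin]] := IH (ex_intro2 _ _ y ys Py).
have [xm|mx] := lerP x m.
  exists x; split; rewrite ?inE ?eqxx // => u /predU1P[-> //|us Pu].
  exact: le_trans xm (mmin u us Pu).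
exists m; split; rewrite ?inE ?ms ?orbT // => u /predU1P[-> _|]; [exact: ltW | exact: mmin].
Qed.

Lemma count_gt_lt (s : seq R) (a b : R) : a < b -> b \in s ->
  (count (fun t => (b < t)%R) s < count (fun t => (a < t)%R) s)%N.
Proof.
move=> ab; elim: s => // x s IH /predU1P[<-|bs] /=.
  rewrite ltxx ab add0n add1n ltnS; apply: sub_count => t /=; exact: lt_trans.
have := IH bs; case: (ltrP b x) => bx; case: (ltrP a x) => ax //=.
- by move: (lt_trans ab bx); rewrite ltNge ax.
- by rewrite !add0n => /ltnW; rewrite -ltnS.
Qed.

End seq_min.

Section billiard_flow.
Variable R : realType.
Notation V3 := 'rV[R]_3.

(* The body of [billiard], with the set [T] of rebound times named. *)
Definition billiard_rebounds (Om : set V3) (n : V3 -> V3) (x v : V3)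
    (X Vs : R -> V3) (T : set R) : Prop :=
  [/\ T `<=` [set t | 0 < t],
      (forall M : R, finite_set (T `&` [set t | 0 <= t <= M])),
      X 0 = x, Vs 0 = v &
  [/\ (forall s, 0 <= s -> closure Om (X s)),
      (forall s1 s2, 0 <= s1 <= s2 -> (forall t, s1 < t < s2 -> ~ T t) ->
         X s2 = X s1 + (s2 - s1) *: Vs s1 /\
         (forall s, s1 <= s < s2 -> Vs s = Vs s1)) &
      (forall t, T t -> bdry Om (X t) /\
         exists s, [/\ 0 <= s < t, (forall u, s < u < t -> ~ T u) &
                     Vs t = refl (Vs s) (n (X t))])]].

Variables (Om : set V3) (n : V3 -> V3) (x v : V3) (X Vs : R -> V3) (T : set R).
Hypothesis hb : billiard_rebounds Om n x v X Vs T.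

Lemma free_flight a s t1 : 0 <= a -> a <= s < t1 ->
  (forall u, a < u < t1 -> ~ T u) -> X s = X a + (s - a) *: Vs a /\ Vs s = Vs a.
Proof.
case: hb => _ _ _ _ [_ hfree _] a0 /andP[aS st1] noT.
have noTs u : a < u < s -> ~ T u.
  by move=> /andP[au us]; apply: noT; rewrite au (lt_trans us st1).
split; first by apply: (hfree a s _ noTs).1; rewrite a0 aS.
by apply: (hfree a t1 _ noT).2; rewrite ?aS ?st1 ?a0 ?(le_trans aS (ltW st1)).
Qed.

Lemma rebound_list M : exists l : seq R, forall t, (T t /\ 0 <= t <= M) <-> t \in l.
Proof.
case: hb => _ fin _ _ _; have [l E] := (finite_seqP _).1 (fin M).
exists l => t; split; last by move=> tl; have : [set` l] t by []; rewrite -E.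
by move=> h; have : (T `&` [set t | 0 <= t <= M]) t by []; rewrite E.
Qed.

Lemma next_event a b : 0 <= a < b ->
  exists t1, [/\ a < t1 <= b, (forall u, a < u < t1 -> ~ T u),
    X t1 = X a + (t1 - a) *: Vs a &
    t1 = b \/ [/\ T t1, bdry Om (X t1) & Vs t1 = refl (Vs a) (n (X t1))]].
Proof.
move=> /andP[a0 ab]; have [l hl] := rebound_list b.
have flight t1 : a < t1 -> (forall u, a < u < t1 -> ~ T u) ->
    X t1 = X a + (t1 - a) *: Vs a.
  case: hb => _ _ _ _ [_ hfree _] at1 noT.
  by apply: (hfree a t1 _ noT).1; rewrite a0 ltW.
have [[u ul au]|none] := pselect (exists2 u, u \in l & a < u); last first.
  have noT u : a < u < b -> ~ T u.
    move=> /andP[au ub] Tu; apply: none; exists u => //.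
    by apply/(hl u).1; split => //; rewrite (ltW ub) (le_trans a0 (ltW au)).
  by exists b; split; [rewrite ab lexx | exact: noT | exact: flight | left].
have [t1 [t1l at1 t1min]] := @seq_has_min _ l (fun t => a < t) (ex_intro2 _ _ u ul au).
have [Tt1 /andP[_ t1b]] := (hl t1).2 t1l.
have noT u' : a < u' < t1 -> ~ T u'.
  move=> /andP[au' ut1] Tu'; have u'l : u' \in l.
    apply/(hl u').1; split => //.
    by rewrite (le_trans a0 (ltW au')) (le_trans (ltW ut1) t1b).
  by have := t1min u' u'l au'; rewrite leNgt ut1.
case: hb => _ _ _ _ [_ hfree hrefl].
have [bd [s [/andP[s0 st1] noT' Vt1]]] := hrefl t1 Tt1.
have Vsa : Vs s = Vs a.
  case: (lerP s a) => sa.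
    by symmetry; apply: (hfree s t1 _ noT').2; rewrite ?s0 ?sa ?(ltW (le_lt_trans sa at1)).
  by apply: (hfree a t1 _ noT).2; rewrite ?a0 ?(ltW sa) ?(ltW at1).
exists t1; split => //; [by rewrite at1 | exact: flight | right; split => //].
by rewrite Vt1 Vsa.
Qed.

Lemma billiard_invariant (M : R) (Q : R -> V3 -> V3 -> Prop) : 0 <= M ->
  Q 0 x v ->
  (forall s1 s z w, 0 <= s1 <= s -> s <= M -> Q s1 z w -> Q s (z + (s - s1) *: w) w) ->
  (forall s z w, 0 < s <= M -> bdry Om z -> Q s z w -> Q s z (refl w (n z))) ->
  forall s, 0 <= s <= M -> Q s (X s) (Vs s).
Proof.
move=> M0 Q0 Qfree Qrefl.
have [l hl] := rebound_list (M + 1).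
suff main k a : count (fun t => a < t) l = k -> 0 <= a <= M ->
    Q a (X a) (Vs a) -> forall s, a <= s <= M -> Q s (X s) (Vs s).
  by case: hb => _ _ X0 V0 _ s; apply: main; rewrite ?lexx ?X0 ?V0.
elim/ltn_ind: k a => k IH a ck /andP[a0 aM] Qa s /andP[aS sM].
have [|t1 [/andP[at1 t1M] noT Xt1 next]] := @next_event a (M + 1).
  by rewrite a0 /=; lra.
have [st1|t1s] := ltrP s t1.
  have [-> ->] := free_flight a0 (s := s) (t1 := t1) (ltac:(by rewrite aS st1)) noT.
  by apply: Qfree; rewrite ?a0 ?aS.
have t1M' : t1 <= M := le_trans t1s sM.
case: next => [t1E|[Tt1 bd Vt1]]; first by move: t1M'; rewrite t1E; lra.
have Qt1 : Q t1 (X t1) (Vs t1).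
  rewrite Vt1; apply: Qrefl => //; first by rewrite t1M' (le_lt_trans a0 at1).
  by rewrite Xt1; apply: Qfree; rewrite ?a0 ?(ltW at1).
have t1l : t1 \in l by apply/(hl t1).1; split => //; rewrite (le_trans a0 (ltW at1)) t1M.
have := count_gt_lt at1 t1l; rewrite ck => lt_k.
by apply: (IH _ lt_k t1 erefl); rewrite ?t1s ?sM ?t1M' ?(le_trans a0 (ltW at1)).
Qed.

End billiard_flow.

Section boundary_chart.
Variable R : realType.
Notation V3 := 'rV[R]_3.
Variables (Om : set V3) (n : V3 -> V3) (p0 b1 b2 b3 : V3) (f : R -> R -> R) (r L : R).
Hypothesis hON : orthonormal3 b1 b2 b3.
Hypothesis hchart : forall z, eball p0 r z ->
  (bdry Om z <-> exists u1 u2, z = chart_pt p0 b1 b2 b3 u1 u2 (f u1 u2)) /\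
  (Om z <-> exists u1 u2 u3, z = chart_pt p0 b1 b2 b3 u1 u2 u3 /\ f u1 u2 < u3).
Hypothesis hf : partials_exist f.
Hypothesis hslope : forall a b, Num.sqrt (pd1 f a b ^+ 2 + pd2 f a b ^+ 2) < 1 / 100.
Hypothesis hL : 0 < L.
Hypothesis hLip : grad_lipschitz_on f r L.
Hypothesis hn : outward_unit_normal Om n.

Definition coord (b z : V3) : R := dot (z - p0) b.
Definition height (z : V3) : R := coord b3 z - f (coord b1 z) (coord b2 z).
Definition slope1 (z : V3) : R := pd1 f (coord b1 z) (coord b2 z).
Definition slope2 (z : V3) : R := pd2 f (coord b1 z) (coord b2 z).
Definition normal_speed (z w : V3) : R :=
  dot w b3 - slope1 z * dot w b1 - slope2 z * dot w b2.
Definition tangential1 (z w : V3) : R := dot w b1 + slope1 z * dot w b3.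
Definition tangential2 (z w : V3) : R := dot w b2 + slope2 z * dot w b3.

Lemma slope_small a b : `|pd1 f a b| <= 1 / 100 /\ `|pd2 f a b| <= 1 / 100.
Proof.
have := hslope a b; rewrite -[X in _ < X]ger0_norm // -sqrtr_sqr ltr_sqrt ?exprn_gt0 //.
by move=> h; rewrite !normr_le_sqr //; split; apply/ltW; nra.
Qed.

Lemma dot_frame u w :
  dot u w = dot u b1 * dot w b1 + dot u b2 * dot w b2 + dot u b3 * dot w b3.
Proof. exact: dot_orthonormal3. Qed.

Lemma frame_le_enorm w :
  [/\ `|dot w b1| <= enorm w, `|dot w b2| <= enorm w & `|dot w b3| <= enorm w].
Proof. by rewrite !normr_le_sqr ?enorm_ge0 // sqr_enorm (dot_frame w w); split; nra. Qed.

Lemma enorm_lt_frame w e : 0 <= e ->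
  dot w b1 ^+ 2 + dot w b2 ^+ 2 + dot w b3 ^+ 2 < e ^+ 2 -> enorm w < e.
Proof. by move=> e0; rewrite enorm_lt_sqr // (dot_frame w w) !expr2. Qed.

Lemma enorm_le_frame_sum w : enorm w <= `|dot w b1| + `|dot w b2| + `|dot w b3|.
Proof.
rewrite enorm_le_sqr ?addr_ge0 // (dot_frame w w) -!expr2.
rewrite -(real_normK (num_real (dot w b1))) -(real_normK (num_real (dot w b2))).
rewrite -(real_normK (num_real (dot w b3))).
have := normr_ge0 (dot w b1); have := normr_ge0 (dot w b2); have := normr_ge0 (dot w b3).
set a1 := `|dot w b1|; set a2 := `|dot w b2|; set a3 := `|dot w b3|; nra.
Qed.

Lemma coord_chart_pt u1 u2 u3 :
  [/\ coord b1 (chart_pt p0 b1 b2 b3 u1 u2 u3) = u1,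
      coord b2 (chart_pt p0 b1 b2 b3 u1 u2 u3) = u2 &
      coord b3 (chart_pt p0 b1 b2 b3 u1 u2 u3) = u3].
Proof.
have [h11 h22 h33 [h12 h13 h23]] := hON.
rewrite /coord.
have -> : chart_pt p0 b1 b2 b3 u1 u2 u3 - p0 = u1 *: b1 + u2 *: b2 + u3 *: b3.
  by rewrite /chart_pt addrC !addrA addNr add0r.
rewrite !dotDl !dotZl h11 h22 h33.
by rewrite (dotC b2 b1) (dotC b3 b1) (dotC b3 b2) h12 h13 h23; split; ring.
Qed.

Lemma chart_pt_coord z : z = chart_pt p0 b1 b2 b3 (coord b1 z) (coord b2 z) (coord b3 z).
Proof.
by rewrite /chart_pt /coord -!(addrA p0) -(orthonormal3_span hON (z - p0)) addrC subrK.
Qed.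

Lemma coordB b z z' : coord b z' - coord b z = dot (z' - z) b.
Proof. by rewrite /coord -dotBl opprB addrA subrK. Qed.

Lemma chart_box z : eball p0 r z -> `|coord b1 z| <= r /\ `|coord b2 z| <= r.
Proof.
by move=> /ltW hz; have [c1 c2 _] := frame_le_enorm (z - p0); split; apply: le_trans hz.
Qed.

Lemma chart_sign z : eball p0 r z ->
  (Om z <-> 0 < height z) /\ (bdry Om z <-> height z = 0).
Proof.
move=> hz; have [-> ->] := hchart hz; rewrite /height; split; split.
- move=> [u1 [u2 [u3 [-> lt_f]]]]; have [-> -> ->] := coord_chart_pt u1 u2 u3.
  by rewrite subr_gt0.
- rewrite subr_gt0 => h.
  by exists (coord b1 z), (coord b2 z), (coord b3 z); rewrite -chart_pt_coord.
- by move=> [u1 [u2 ->]]; have [-> -> ->] := coord_chart_pt u1 u2 (f u1 u2); rewrite subrr.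
- move/eqP; rewrite subr_eq0 => /eqP h.
  by exists (coord b1 z), (coord b2 z); rewrite -h -chart_pt_coord.
Qed.

Lemma f_lipschitz a b a' b' : `|a| <= r -> `|b| <= r -> `|a'| <= r -> `|b'| <= r ->
  `|f a b - f a' b'| <= 1 / 100 * `|a - a'| + 1 / 100 * `|b - b'|.
Proof. by apply: partials_lipschitz => // u w _ _; apply: slope_small. Qed.

Lemma slope_lipschitz z z' : eball p0 r z -> eball p0 r z' ->
  `|slope1 z' - slope1 z| <= 2 * L * enorm (z' - z) /\
  `|slope2 z' - slope2 z| <= 2 * L * enorm (z' - z).
Proof.
move=> hz hz'; have [z1 z2] := chart_box hz; have [z1' z2'] := chart_box hz'.
have [d1 d2 _] := frame_le_enorm (z' - z); rewrite -!coordB in d1 d2.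
have [s1 s2] := hLip z1' z2' z1 z2.
have dist : L * (`|coord b1 z' - coord b1 z| + `|coord b2 z' - coord b2 z|)
    <= 2 * L * enorm (z' - z) by rewrite [2 * L]mulrC -mulrA ler_wpM2l ?(ltW hL) //; lra.
by split; [apply: le_trans s1 dist | apply: le_trans s2 dist].
Qed.

Lemma normal_speedB z w w' : normal_speed z (w - w') = normal_speed z w - normal_speed z w'.
Proof. by rewrite /normal_speed !dotBl; ring. Qed.

Lemma normal_speedZ z a w : normal_speed z (a *: w) = a * normal_speed z w.
Proof. by rewrite /normal_speed !dotZl; ring. Qed.

Lemma tangential1B z w w' : tangential1 z (w - w') = tangential1 z w - tangential1 z w'.
Proof. by rewrite /tangential1 !dotBl; ring. Qed.

Lemma tangential2B z w w' : tangential2 z (w - w') = tangential2 z w - tangential2 z w'.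
Proof. by rewrite /tangential2 !dotBl; ring. Qed.

Lemma height_taylor z z' : eball p0 r z -> eball p0 r z' ->
  `|height z' - height z - normal_speed z (z' - z)| <= 2 * L * enorm (z' - z) ^+ 2.
Proof.
move=> hz hz'; have [z1 z2] := chart_box hz; have [z1' z2'] := chart_box hz'.
set q1 := dot (z' - z) b1; set q2 := dot (z' - z) b2; set q3 := dot (z' - z) b3.
have e1 : coord b1 z' = coord b1 z + q1 by rewrite /q1 -coordB addrC subrK.
have e2 : coord b2 z' = coord b2 z + q2 by rewrite /q2 -coordB addrC subrK.
have e3 : coord b3 z' = coord b3 z + q3 by rewrite /q3 -coordB addrC subrK.
rewrite e1 e2 in z1' z2'.
have T := grad_lipschitz_taylor hf (ltW hL) hLip z1 z2 z1' z2'.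
have -> : height z' - height z - normal_speed z (z' - z) =
    - (f (coord b1 z + q1) (coord b2 z + q2) - f (coord b1 z) (coord b2 z) -
       (pd1 f (coord b1 z) (coord b2 z) * q1 + pd2 f (coord b1 z) (coord b2 z) * q2)).
  by rewrite /height /normal_speed /slope1 /slope2 e1 e2 e3 -/q1 -/q2 -/q3; ring.
rewrite normrN; apply: le_trans T _.
have := sqr_enorm (z' - z); rewrite (dot_frame (z' - z)) -/q1 -/q2 -/q3 => E.
have : (`|q1| + `|q2|) ^+ 2 <= 2 * enorm (z' - z) ^+ 2.
  rewrite E -!expr2 -(real_normK (num_real q1)) -(real_normK (num_real q2)).
  by have := sqr_ge0 (`|q1| - `|q2|); have := sqr_ge0 q3; nra.
by move=> S; rewrite [2 * L]mulrC -mulrA ler_wpM2l // ltW.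
Qed.

Lemma normal_speed_drift z z' w vM : eball p0 r z -> eball p0 r z' -> enorm w <= vM ->
  `|normal_speed z' w - normal_speed z w| <= 4 * L * vM * enorm (z' - z).
Proof.
move=> hz hz' hw; have [s1 s2] := slope_lipschitz hz hz'.
have [w1 w2 _] := frame_le_enorm w.
have -> : normal_speed z' w - normal_speed z w =
    - ((slope1 z' - slope1 z) * dot w b1 + (slope2 z' - slope2 z) * dot w b2).
  by rewrite /normal_speed; ring.
rewrite normrN; apply: le_trans (ler_normD _ _) _; rewrite !normrM.
have m1 := ler_pM (normr_ge0 _) (normr_ge0 _) s1 (le_trans w1 hw).
have m2 := ler_pM (normr_ge0 _) (normr_ge0 _) s2 (le_trans w2 hw).
by apply: le_trans (lerD m1 m2) _; nra.
Qed.

Lemma tangential_drift z z' w vM : eball p0 r z -> eball p0 r z' -> enorm w <= vM ->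
  `|tangential1 z' w - tangential1 z w| <= 4 * L * vM * enorm (z' - z) /\
  `|tangential2 z' w - tangential2 z w| <= 4 * L * vM * enorm (z' - z).
Proof.
move=> hz hz' hw; have [s1 s2] := slope_lipschitz hz hz'.
have [_ _ w3] := frame_le_enorm w.
have vM0 := le_trans (enorm_ge0 w) hw.
have half : 2 * L * enorm (z' - z) * vM <= 4 * L * vM * enorm (z' - z).
  have := mulr_ge0 (mulr_ge0 (ltW hL) vM0) (enorm_ge0 (z' - z)); nra.
have -> : tangential1 z' w - tangential1 z w = (slope1 z' - slope1 z) * dot w b3.
  by rewrite /tangential1; ring.
have -> : tangential2 z' w - tangential2 z w = (slope2 z' - slope2 z) * dot w b3.
  by rewrite /tangential2; ring.
have w3' := le_trans w3 hw; rewrite !normrM; split.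
- exact: le_trans (ler_pM (normr_ge0 _) (normr_ge0 _) s1 w3') half.
- exact: le_trans (ler_pM (normr_ge0 _) (normr_ge0 _) s2 w3') half.
Qed.

Lemma enorm_le_chart_speeds z u al be :
  `|tangential1 z u| <= al -> `|tangential2 z u| <= al -> `|normal_speed z u| <= be ->
  enorm u <= 3 * al + 2 * be.
Proof.
rewrite /tangential1 /tangential2 /normal_speed => h1 h2 h3.
have [g1 g2] := slope_small (coord b1 z) (coord b2 z).
rewrite -/(slope1 z) -/(slope2 z) in g1 g2.
have mul_small (g w : R) : `|g| <= 1 / 100 -> `|g * w| <= 1 / 100 * `|w|.
  by move=> hg; rewrite normrM ler_wpM2r.
have k1 : `|dot u b1| <= `|dot u b1 + slope1 z * dot u b3| + `|slope1 z * dot u b3|.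
  by rewrite -{1}[dot u b1](addrK (slope1 z * dot u b3)) ler_normB.
have k2 : `|dot u b2| <= `|dot u b2 + slope2 z * dot u b3| + `|slope2 z * dot u b3|.
  by rewrite -{1}[dot u b2](addrK (slope2 z * dot u b3)) ler_normB.
have k3 : `|dot u b3| <= `|dot u b3 - slope1 z * dot u b1 - slope2 z * dot u b2|
    + `|slope1 z * dot u b1| + `|slope2 z * dot u b2|.
  set F := dot u b3 - _ - _.
  have -> : dot u b3 = F + slope1 z * dot u b1 + slope2 z * dot u b2 by rewrite /F; ring.
  by apply: le_trans (ler_normD _ _) _; rewrite lerD2r ler_normD.
have m13 := @mul_small _ (dot u b3) g1; have m23 := @mul_small _ (dot u b3) g2.
have m11 := @mul_small _ (dot u b1) g1; have m22 := @mul_small _ (dot u b2) g2.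
have al0 := le_trans (normr_ge0 _) h1; have be0 := le_trans (normr_ge0 _) h3.
by apply: le_trans (enorm_le_frame_sum u) _; lra.
Qed.

Lemma enorm_refl_normal y w : bdry Om y -> enorm (refl w (n y)) = enorm w.
Proof. by move=> /hn[ny1 _ _]; rewrite enorm_refl // -sqr_enorm ny1 expr1n. Qed.

Lemma layer_height z l : 0 < l -> eball p0 (r - l) z -> layer Om l z ->
  0 < height z < 2 * l.
Proof.
move=> l0 hz [Oz [y [bdy zy]]].
have hz' : eball p0 r z by apply: lt_le_trans hz _; lra.
have hy : eball p0 r y.
  rewrite /eball /=; apply: le_lt_trans (enorm_triangle p0 z y) _.
  by rewrite (enorm_distC y z); move: hz; rewrite /eball /=; lra.
rewrite ((chart_sign hz').1.1 Oz) /=.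
have Hy := (chart_sign hy).2.1 bdy.
have [z1 z2] := chart_box hz'; have [y1 y2] := chart_box hy.
have := f_lipschitz z1 z2 y1 y2; rewrite !coordB => hfl.
have [d1 d2 d3] := frame_le_enorm (z - y).
have -> : height z = dot (z - y) b3
    - (f (coord b1 z) (coord b2 z) - f (coord b1 y) (coord b2 y)).
  by rewrite -coordB -[height z]subr0 -Hy /height; ring.
have := ler_norm (dot (z - y) b3).
have := ler_norm (- (f (coord b1 z) (coord b2 z) - f (coord b1 y) (coord b2 y))).
rewrite normrN; lra.
Qed.

Lemma boundary_lift y q1 q2 t : bdry Om y -> 0 < t -> enorm (y - p0) + 2 * t <= r ->
  `|q1| <= t -> `|q2| <= t ->
  exists z, [/\ bdry Om z, eball p0 r z, enorm (z - y) < 2 * t,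
                dot (z - y) b1 = q1 & dot (z - y) b2 = q2].
Proof.
move=> bdy t0 ytr hq1 hq2.
have hy : eball p0 r y by rewrite /eball /=; lra.
have y3 : coord b3 y = f (coord b1 y) (coord b2 y).
  by apply/eqP; rewrite -subr_eq0; apply/eqP/(chart_sign hy).2.
have [y1 y2] := chart_box hy; have [c1 c2 _] := frame_le_enorm (y - p0).
rewrite -/(coord b1 y) -/(coord b2 y) in c1 c2.
set u1 := coord b1 y + q1; set u2 := coord b2 y + q2.
have u1r : `|u1| <= r by apply: le_trans (ler_normD _ _) _; lra.
have u2r : `|u2| <= r by apply: le_trans (ler_normD _ _) _; lra.
pose z := chart_pt p0 b1 b2 b3 u1 u2 (f u1 u2).
have [zc1 zc2 zc3] := coord_chart_pt u1 u2 (f u1 u2); rewrite -/z in zc1 zc2 zc3.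
have dz1 : dot (z - y) b1 = q1 by rewrite -coordB zc1 /u1; ring.
have dz2 : dot (z - y) b2 = q2 by rewrite -coordB zc2 /u2; ring.
have dz3 : `|dot (z - y) b3| <= t / 50.
  rewrite -coordB zc3 y3; apply: le_trans (f_lipschitz u1r u2r y1 y2) _.
  by rewrite /u1 /u2 !(addrC (coord _ y)) !addrK; lra.
have zy : enorm (z - y) < 2 * t.
  apply: enorm_lt_frame; first lra.
  move: hq1 hq2 dz3; rewrite dz1 dz2 !normr_le_sqr ?divr_ge0 ?(ltW t0) //; nra.
have hz : eball p0 r z.
  by rewrite /eball /=; apply: le_lt_trans (enorm_triangle p0 y z) _; lra.
exists z; split => //; apply/(hchart hz).1; by exists u1, u2.
Qed.

Lemma tangent_normal_le_chord y z a b t : bdry Om y -> bdry Om z ->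
  eball p0 r y -> eball p0 r z -> dot (z - y) b1 = t * a -> dot (z - y) b2 = t * b ->
  `|t * (a * dot (n y) b1 + b * dot (n y) b2
         + (a * slope1 y + b * slope2 y) * dot (n y) b3)|
    <= `|dot (z - y) (n y)| + 2 * L * enorm (z - y) ^+ 2.
Proof.
move=> bdy bdz hy hz dz1 dz2.
have [ny1 _ _] := hn bdy.
have N3 : `|dot (n y) b3| <= 1 by have [_ _] := frame_le_enorm (n y); rewrite ny1.
have := height_taylor hy hz.
rewrite (chart_sign hy).2.1 // (chart_sign hz).2.1 // subrr sub0r normrN => ns.
(* the tangent vector differs from the chord z - y by a second-order normal term *)
have -> : t * (a * dot (n y) b1 + b * dot (n y) b2
    + (a * slope1 y + b * slope2 y) * dot (n y) b3)
    = dot (z - y) (n y) - normal_speed y (z - y) * dot (n y) b3.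
  by rewrite (dot_frame (z - y) (n y)) /normal_speed dz1 dz2; ring.
apply: le_trans (ler_normB _ _) _; rewrite normrM lerD2l.
exact: le_trans (ler_piMr (normr_ge0 _) N3) ns.
Qed.

Lemma normal_tangent y a b : bdry Om y -> eball p0 r y -> `|a| <= 1 -> `|b| <= 1 ->
  a * dot (n y) b1 + b * dot (n y) b2 + (a * slope1 y + b * slope2 y) * dot (n y) b3 = 0.
Proof.
move=> bdy hy ha hb; have [_ tang _] := hn bdy.
apply/eqP; rewrite -normr_le0; apply/ler_addgt0Pr => e e0; rewrite add0r.
have e4 : 0 < e / 4 by rewrite divr_gt0.
have [rho [rho0 hrho]] := tang _ e4.
have ry : 0 < r - enorm (y - p0) by move: hy; rewrite /eball /=; lra.
have L16 : 0 < 16 * L by rewrite mulr_gt0.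
pose t := Num.min (Num.min (rho / 2) ((r - enorm (y - p0)) / 2)) (e / (16 * L)).
have [t0 trho tr te] : [/\ 0 < t, t <= rho / 2, t <= (r - enorm (y - p0)) / 2
    & t <= e / (16 * L)].
  by rewrite /t !lt_min !ge_min !lexx /= ?orbT !divr_gt0.
clearbody t.
have hq q : `|q| <= 1 -> `|t * q| <= t.
  by move=> hq; rewrite normrM gtr0_norm //; apply: ler_piMr => //; exact: ltW.
have [z [bdz hz zy dz1 dz2]] := boundary_lift bdy t0 (ltac:(lra)) (hq _ ha) (hq _ hb).
have := tangent_normal_le_chord bdy bdz hy hz dz1 dz2.
rewrite normrM (gtr0_norm t0) => chord; rewrite -(ler_pM2l t0); apply: le_trans chord _.
have ez0 := enorm_ge0 (z - y).
have c1 : `|dot (z - y) (n y)| <= e / 2 * t.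
  apply: le_trans (hrho z bdz (ltac:(lra))) _.
  have -> : e / 2 * t = e / 4 * (2 * t) by field.
  by rewrite ler_wpM2l ?ltW // divr_ge0 ?ltW.
have c2 : 2 * L * enorm (z - y) ^+ 2 <= 2 * L * (2 * t) ^+ 2.
  apply: ler_wpM2l; first by rewrite mulr_ge0 ?ltW.
  by rewrite ler_pXn2r ?nnegrE ?mulr_ge0 ?(ltW t0) ?(ltW zy).
have c3 : 16 * L * t * t <= e * t.
  by apply: ler_wpM2r; [exact: ltW | rewrite mulrC -ler_pdivlMr].
lra.
Qed.

Lemma reflection_chart_invariants y w : bdry Om y -> eball p0 r y ->
  [/\ tangential1 y (refl w (n y)) = tangential1 y w,
      tangential2 y (refl w (n y)) = tangential2 y w &
      normal_speed y (refl w (n y)) = - normal_speed y w].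
Proof.
move=> bdy hy.
have n1 : `|1 : R| <= 1 by rewrite normr1.
have n0 : `|0 : R| <= 1 by rewrite normr0 ler01.
have t1 := normal_tangent bdy hy n1 n0; have t2 := normal_tangent bdy hy n0 n1.
(* n y is proportional to (- slope1 y, - slope2 y, 1) *)
have e1 : dot (n y) b1 = - (slope1 y * dot (n y) b3) by rewrite -[RHS]addr0 -t1; ring.
have e2 : dot (n y) b2 = - (slope2 y * dot (n y) b3) by rewrite -[RHS]addr0 -t2; ring.
have [ny1 _ _] := hn bdy.
have hN := sqr_enorm (n y); rewrite ny1 expr1n (dot_frame (n y) (n y)) e1 e2 in hN.
have reflE b : dot (refl w (n y)) b = dot w b - 2 * dot w (n y) * dot (n y) b.
  by rewrite /refl dotBl dotZl.
rewrite /tangential1 /tangential2 /normal_speed !reflE (dot_frame w (n y)) e1 e2.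
move: hN; move: (slope1 y) (slope2 y) (dot (n y) b3) (dot w b1) (dot w b2) (dot w b3).
move=> g1 g2 N3 w1 w2 w3 hN; split; [by ring | by ring |].
apply/eqP; rewrite -subr_eq0 opprK; apply/eqP.
transitivity (2 * (w3 - g1 * w1 - g2 * w2) *
  (1 - (- (g1 * N3) * - (g1 * N3) + - (g2 * N3) * - (g2 * N3) + N3 * N3))); first by ring.
by rewrite hN subrr mulr0.
Qed.

Section chart_trajectory.
Variables (x v : V3) (X Vs : R -> V3) (T : set R) (vM K : R).
Hypothesis hb : billiard_rebounds Om n x v X Vs T.
Hypothesis hv : enorm v <= vM.
Hypothesis hK : 4 * L * vM ^+ 2 <= K.

Lemma flight_height z w t : eball p0 r z -> eball p0 r (z + t *: w) -> 0 <= t ->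
  enorm w <= vM -> `|height (z + t *: w) - height z - t * normal_speed z w| <= K * t ^+ 2.
Proof.
move=> hz hz' t0 hw; have := height_taylor hz hz'.
have -> : z + t *: w - z = t *: w by rewrite addrC addKr.
rewrite normal_speedZ enormZ (ger0_norm t0) => /le_trans; apply.
have e0 := enorm_ge0 w.
have ew : enorm w ^+ 2 <= vM ^+ 2 by rewrite ler_pXn2r ?nnegrE // (le_trans e0 hw).
apply: le_trans (_ : 2 * L * (t ^+ 2 * vM ^+ 2) <= _).
  by rewrite exprMn ler_pM2l ?mulr_gt0 //; apply: ler_wpM2l ew; apply: sqr_ge0.
have -> : 2 * L * (t ^+ 2 * vM ^+ 2) = 2 * L * vM ^+ 2 * t ^+ 2 by ring.
have := mulr_ge0 (ltW hL) (sqr_ge0 vM).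
by move=> ?; apply: ler_wpM2r; [apply: sqr_ge0 | move: hK; lra].
Qed.

Lemma drift_in_chart teps s z : eball p0 (r - vM * teps) x -> s <= teps ->
  enorm (z - x) <= vM * s -> eball p0 r z.
Proof.
move=> hx ste hzx; have vM0 : 0 <= vM := le_trans (enorm_ge0 v) hv.
have : vM * s <= vM * teps by rewrite ler_wpM2l.
move: hx; rewrite /eball /= => hx hs.
by apply: le_lt_trans (enorm_triangle p0 x z) _; lra.
Qed.

Lemma normal_speed_small tau l eps : 0 < tau -> K * tau <= eps / 4 ->
  l <= eps * tau / 16 ->
  (forall s, 0 <= s <= tau -> eball p0 r (X s) /\ 0 < height (X s) < 2 * l) ->
  `|normal_speed x v| < eps.
Proof.
move=> tau0 Ktau ltau hX; have [_ _ X0 V0 _] := hb.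
have [|t1 [/andP[t10 t1tau] _ Xt1 [t1E|[_ bd _]]]] := next_event hb (a := 0) (b := tau).
- by rewrite lexx.
- rewrite t1E X0 V0 subr0 in Xt1.
  have [hx /andP[H0 H0l]] := hX 0 (ltac:(by rewrite lexx ltW)).
  have [hxt /andP[H1 H1l]] := hX tau (ltac:(by rewrite lexx ltW)).
  rewrite X0 in hx H0 H0l; rewrite Xt1 in hxt H1 H1l.
  have hfl := flight_height hx hxt (ltW tau0) hv.
  have hK2 : K * tau ^+ 2 <= eps / 4 * tau by rewrite expr2 mulrA ler_wpM2r // ltW.
  rewrite -(ltr_pM2l tau0) -{1}(gtr0_norm tau0) -normrM.
  have -> : tau * normal_speed x v = (height (x + tau *: v) - height x)
      - (height (x + tau *: v) - height x - tau * normal_speed x v) by ring.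
  apply: le_lt_trans (ler_normB _ _) _.
  have : `|height (x + tau *: v) - height x| < 2 * l by rewrite ltr_norml; lra.
  lra.
- (* a rebound would put X t1 on the boundary, where the height vanishes *)
  have [ht1 /andP[Ht1 _]] := hX t1 (ltac:(by rewrite ltW)).
  by move: Ht1; rewrite (chart_sign ht1).2.1 // ltxx.
Qed.

Definition drift_bounds (s : R) (z w : V3) :=
  [/\ enorm (z - x) <= vM * s, enorm w = enorm v,
      `|tangential1 z w - tangential1 x v| <= K * s,
      `|tangential2 z w - tangential2 x v| <= K * s &
      `|normal_speed z w| <= `|normal_speed x v| + K * s].

Lemma billiard_drift teps : 0 <= teps -> eball p0 (r - vM * teps) x ->
  forall s, 0 <= s <= teps -> drift_bounds s (X s) (Vs s).
Proof.
move=> teps0 hx; have vM0 : 0 <= vM := le_trans (enorm_ge0 v) hv.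
apply: (billiard_invariant (Q := drift_bounds) hb teps0).
- by split; rewrite ?subrr ?enorm0 ?normr0 ?mulr0 ?addr0.
- move=> s1 s z w /andP[s10 s1s] ste [hzx hw hA1 hA2 hF].
  have hw' : enorm w <= vM by rewrite hw.
  have hz := drift_in_chart hx (le_trans s1s ste) hzx.
  have step : enorm (z + (s - s1) *: w - z) <= vM * (s - s1).
    rewrite addrC addKr enormZ ger0_norm ?subr_ge0 // mulrC.
    by rewrite ler_wpM2r ?subr_ge0.
  have hz'x : enorm (z + (s - s1) *: w - x) <= vM * s.
    apply: le_trans (enorm_triangle x z _) _; apply: le_trans (lerD hzx step) _.
    by rewrite mulrBr addrCA subrr addr0.
  have hz' := drift_in_chart hx ste hz'x.
  have [dA1 dA2] := tangential_drift hz hz' hw'.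
  have dF := normal_speed_drift hz hz' hw'.
  have c0 : 0 <= 4 * L * vM by rewrite !mulr_ge0 // ltW.
  have KLs : 4 * L * vM * enorm (z + (s - s1) *: w - z) <= K * (s - s1).
    apply: le_trans (_ : 4 * L * vM * (vM * (s - s1)) <= _); first exact: ler_wpM2l.
    by rewrite mulrA -(mulrA (4 * L) vM vM) -expr2; apply: ler_wpM2r hK; rewrite subr_ge0.
  have Ks : K * (s - s1) + K * s1 = K * s by rewrite mulrBr subrK.
  split => //.
  + apply: le_trans (ler_distD (tangential1 z w) _ _) _.
    by rewrite -Ks lerD // (le_trans dA1 KLs).
  + apply: le_trans (ler_distD (tangential2 z w) _ _) _.
    by rewrite -Ks lerD // (le_trans dA2 KLs).
  + set z' := z + (s - s1) *: w in dF KLs *.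
    have := ler_normD (normal_speed z' w - normal_speed z w) (normal_speed z w).
    rewrite subrK => /le_trans; apply.
    by rewrite -Ks addrCA lerD // (le_trans dF KLs).
- move=> s z w /andP[s0 ste] bd [hzx hw hA1 hA2 hF].
  have [r1 r2 rF] := reflection_chart_invariants w bd (drift_in_chart hx ste hzx).
  by split; rewrite ?r1 ?r2 ?rF ?normrN ?enorm_refl_normal.
Qed.

Lemma velocity_close eps s z w : 0 <= s -> K * s <= eps / 64 ->
  `|normal_speed x v| < eps / 8 -> eball p0 r x -> eball p0 r z ->
  drift_bounds s z w -> enorm (w - v) < eps.
Proof.
move=> s0 Ks hF0 hx hz [hzx _ hA1 hA2 hF].
have vM0 : 0 <= vM := le_trans (enorm_ge0 v) hv.
have [dA1 dA2] := tangential_drift hx hz hv.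
have dF := normal_speed_drift hx hz hv.
set D := 4 * L * vM * enorm (z - x) in dA1 dA2 dF.
have KLs : D <= K * s.
  have c0 : 0 <= 4 * L * vM by rewrite !mulr_ge0 // ltW.
  apply: le_trans (_ : 4 * L * vM * (vM * s) <= _); first exact: ler_wpM2l.
  by rewrite mulrA -(mulrA (4 * L) vM vM) -expr2; apply: ler_wpM2r hK.
apply: le_lt_trans (enorm_le_chart_speeds (z := z) (al := K * s + D)
  (be := (`|normal_speed x v| + K * s) + (`|normal_speed x v| + D)) _ _ _) _.
- rewrite tangential1B; apply: le_trans (ler_distD (tangential1 x v) _ _) _.
  by apply: lerD hA1 _; rewrite distrC.
- rewrite tangential2B; apply: le_trans (ler_distD (tangential2 x v) _ _) _.
  by apply: lerD hA2 _; rewrite distrC.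
- rewrite normal_speedB; apply: le_trans (ler_normB _ _) (lerD hF _).
  have := ler_normD (normal_speed z v - normal_speed x v) (normal_speed x v).
  by rewrite subrK addrC => /le_trans; apply; rewrite lerD2l.
- by have := normr_ge0 (normal_speed x v); clearbody D; lra.
Qed.

Lemma chart_velocity_stable eps teps tau l : 0 < eps -> 0 <= teps ->
  K * teps <= eps / 64 -> 0 < tau <= teps -> l <= eps * tau / 128 ->
  eball p0 (r - vM * teps) x ->
  (forall s, 0 <= s <= tau -> layer Om l (X s) /\ eball p0 (r - l) (X s)) ->
  forall s, 0 <= s <= teps -> enorm (Vs s - v) < eps.
Proof.
move=> eps0 teps0 Kteps /andP[tau0 tauteps] ltau hx hlay s /andP[s0 ste].
have vM0 : 0 <= vM := le_trans (enorm_ge0 v) hv.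
have K0 : 0 <= K by apply: le_trans _ hK; rewrite !mulr_ge0 // ltW.
have hx' : eball p0 r x by apply: drift_in_chart hx teps0 _; rewrite subrr enorm0 mulr0.
have hF0 : `|normal_speed x v| < eps / 8.
  apply: (@normal_speed_small tau l) => //.
  - by apply: le_trans (ler_wpM2l K0 tauteps) _; lra.
  - by lra.
  move=> s' /hlay[lay hs'].
  have l0 : 0 < l by case: lay => _ [y [_ /(le_lt_trans (enorm_ge0 _))]].
  split; last exact: layer_height.
  by apply: lt_le_trans hs' _; lra.
have hd := billiard_drift teps0 hx (ltac:(by rewrite s0 ste) : 0 <= s <= teps).
have hXs : eball p0 r (X s) by case: hd => hsx _ _ _ _; apply: drift_in_chart hx ste hsx.
apply: velocity_close s0 _ hF0 hx' hXs hd.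
exact: le_trans (ler_wpM2l K0 ste) _.
Qed.

End chart_trajectory.

End boundary_chart.

Lemma exists_short_time (R : realType) (K vM eps d : R) :
  0 < K -> 0 < vM -> 0 < eps -> 0 < d ->
  exists2 teps, 0 < teps & K * teps <= eps / 64 /\ vM * teps <= d.
Proof.
move=> K0 vM0 eps0 d0; exists (Num.min (eps / (64 * K)) (d / vM)).
  by rewrite lt_min !divr_gt0 ?mulr_gt0.
split.
  have : Num.min (eps / (64 * K)) (d / vM) <= eps / (64 * K) by rewrite ge_min lexx.
  by rewrite !ler_pdivlMr ?mulr_gt0 //; lra.
have : Num.min (eps / (64 * K)) (d / vM) <= d / vM by rewrite ge_min lexx orbT.
by rewrite ler_pdivlMr //; lra.
Qed.

Theorem lemma2p7 (R : realType) (Om : set 'rV[R]_3) (n : 'rV[R]_3 -> 'rV[R]_3)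
    (d : R) (m1 : nat) (x0 e1 e2 : 'I_m1 -> 'rV[R]_3)
    (phi : 'I_m1 -> R -> R -> R) :
  open Om -> connected Om -> bounded3 Om ->
  C2_boundary Om -> outward_unit_normal Om n ->
  0 < d -> d < 1 ->
  (* d smaller than a uniform interior sphere radius d_r *)
  (exists dr : R, d < dr /\
     forall y, bdry Om y -> eball (y - dr *: n y) dr `<=` Om) ->
  (forall i, bdry Om (x0 i)) ->
  (forall y, bdry Om y -> exists i, eball (x0 i) (d / 8) y) ->
  (forall i, orthonormal3 (e1 i) (e2 i) (- n (x0 i))) ->
  (forall i, [/\ C2 (phi i), phi i 0 0 = 0, pd1 (phi i) 0 0 = 0,
                 pd2 (phi i) 0 0 = 0 &
                 forall a b, Num.sqrt (pd1 (phi i) a b ^+ 2 + pd2 (phi i) a b ^+ 2)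
                             < 1 / 100]) ->
  (forall i z, eball (x0 i) (3 * d) z ->
     (bdry Om z <-> exists u1 u2,
         z = chart_pt (x0 i) (e1 i) (e2 i) (- n (x0 i)) u1 u2 (phi i u1 u2)) /\
     (Om z <-> exists u1 u2 u3,
         z = chart_pt (x0 i) (e1 i) (e2 i) (- n (x0 i)) u1 u2 u3 /\
         phi i u1 u2 < u3)) ->
  forall vM eps : R, 0 < vM -> 0 < eps ->
  exists teps : R, 0 < teps /\
    forall tau2 : R, 0 < tau2 <= teps ->
    exists l : R, 0 < l /\
      forall (i : 'I_m1) (x v : 'rV[R]_3) (X Vs : R -> 'rV[R]_3),
        eball (x0 i) d x -> enorm v <= vM ->
        billiard Om n x v X Vs ->
        (forall s, 0 <= s <= tau2 -> layer Om l (X s) /\ eball (x0 i) d (X s)) ->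
        forall s, 0 <= s <= teps -> enorm (Vs s - v) < eps.
Proof.
move=> _ _ _ _ hn d0 _ _ _ _ hON hphi hchart vM eps vM0 eps0.
have [L L0 hLip] : exists2 L, 0 < L & forall i, grad_lipschitz_on (phi i) (3 * d) L.
  by apply: C2_family_grad_lipschitz => i; case: (hphi i).
pose K := 4 * L * vM ^+ 2 + 1.
have hK : 4 * L * vM ^+ 2 <= K by rewrite lerDl.
have K0 : 0 < K by rewrite ltr_wpDl // !mulr_ge0 // ltW.
have [teps teps0 [Kteps vteps]] := exists_short_time K0 vM0 eps0 d0.
exists teps; split => // tau /andP[tau0 tauteps].
pose l := Num.min (eps * tau / 128) d.
have [l0 ltau ld] : [/\ 0 < l, l <= eps * tau / 128 & l <= d].
  by rewrite lt_min !ge_min !lexx ?orbT !divr_gt0 ?mulr_gt0.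
exists l; split => // i x v X Vs hx hv [T hT] hlay s hs.
have [[hf _ _ _ _] _ _ _ hslope] := hphi i.
apply: (chart_velocity_stable (hON i) (hchart i) hf hslope L0 (hLip i) hn hT hv hK
  (teps := teps) (tau := tau) (l := l) eps0 (ltW teps0) Kteps _ _ _ _ hs).
- by rewrite tau0.
- exact: ltau.
- by apply: lt_le_trans hx _; lra.
- by move=> s' /hlay[lay hs']; split => //; apply: lt_le_trans hs' _; lra.
Qed.
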